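(* Let $G$ be a graph (the similarity graph) on the vertex set $\{\mathbf{y}_1,\dots,\mathbf{y}_n\}$ of a sequence of observations, identified with the index set $\{1,\dots,n\}$, with edge set also denoted $G$. Work under the permutation null distribution, which places probability $1/n!$ on each of the $n!$ orderings of the observations (the graph $G$ is held fixed; only the time-indices of the observations are permuted); $\mathbf{E}$, $\mathbf{Var}$, $\mathbf{Cov}$ denote moments under this distribution. (Single change-point.) For $1\le t<n$ let $R_1(t)$ be the number of edges of $G$ joining two observations with indices $\le t$, and $R_2(t)$ the number of edges joining two observations with indices $>t$. Let $\Sigma(t)$ be the covariance matrix of $(R_1(t),R_2(t))^T$ under the permutation null (assumed invertible), and $$S(t)=\begin{pmatrix}R_1(t)-\mathbf{E}R_1(t)\\ R_2(t)-\mathbf{E}R_2(t)\end{pmatrix}^T\Sigma(t)^{-1}\begin{pmatrix}R_1(t)-\mathbf{E}R_1(t)\\ R_2(t)-\mathbf{E}R_2(t)\end{pmatrix}.$$ With $p(t)=\frac{t-1}{n-2}$, $q(t)=1-p(t)$, let $R_w(t)=q(t)R_1(t)+p(t)R_2(t)$ and $R_{\mathrm{diff}}(t)=R_1(t)-R_2(t)$, and let $Z_w(t)=\frac{R_w(t)-\mathbf{E}R_w(t)}{\sqrt{\mathbf{Var}R_w(t)}}$, $Z_{\mathrm{diff}}(t)=\frac{R_{\mathrm{diff}}(t)-\mathbf{E}R_{\mathrm{diff}}(t)}{\sqrt{\mathbf{Var}R_{\mathrm{diff}}(t)}}$ (variances assumed positive). Then $$S(t)=Z_w^2(t)+Z_{\mathrm{diff}}^2(t).$$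 (Changed interval.) For $1\le t_1<t_2\le n$ with $m=t_2-t_1$, let $R_1(t_1,t_2)$ be the number of edges of $G$ joining two observations with indices outside $(t_1,t_2]$, and $R_2(t_1,t_2)$ the number of edges joining two observations with indices in $(t_1,t_2]$. Define $S(t_1,t_2)$ as the same quadratic form in $(R_1(t_1,t_2)-\mathbf{E}R_1(t_1,t_2),\,R_2(t_1,t_2)-\mathbf{E}R_2(t_1,t_2))$ with the inverse of their permutation-null covariance matrix; let $R_w(t_1,t_2)=\frac{m-1}{n-2}R_1(t_1,t_2)+\frac{n-m-1}{n-2}R_2(t_1,t_2)$, $R_{\mathrm{diff}}(t_1,t_2)=R_1(t_1,t_2)-R_2(t_1,t_2)$, and $Z_w(t_1,t_2)$, $Z_{\mathrm{diff}}(t_1,t_2)$ their standardizations by permutation-null mean and standard deviation. Then $$S(t_1,t_2)=Z_w^2(t_1,t_2)+Z_{\mathrm{diff}}^2(t_1,t_2).$$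
   Context: The weighted statistic weights each within-group edge count by (size of the other group $-1$)$/(n-2)$; in the single change-point case the group before $t$ has size $t$ and the group after has size $n-t$. *)

From HB Require Import structures.
From mathcomp Require Import all_boot all_order all_algebra all_fingroup.
Set Implicit Arguments. Unset Strict Implicit. Unset Printing Implicit Defensive.
Import Order.TTheory GRing.Theory Num.Theory.
Local Open Scope ring_scope.

(* Observations are the vertices 'I_n of the similarity graph e (a simple
   graph: symmetric irreflexive relation).  A permutation s : {perm 'I_n}
   assigns to observation i the time index (s i).+1 in {1,..,n}, i.e. the
   0-based time s i. *)

Section Defs.
Variable R : rcfType.
Variable n : nat.

Definition Eperm (X : {perm 'I_n} -> R) : R :=
  (\sum_(s : {perm 'I_n}) X s) / (n`!)%:R.
Definition Covp (X Y : {perm 'I_n} -> R) : R :=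
  Eperm (fun s => (X s - Eperm X) * (Y s - Eperm Y)).
Definition Varp (X : {perm 'I_n} -> R) : R := Covp X X.
Definition Zstd (X : {perm 'I_n} -> R) (s : {perm 'I_n}) : R :=
  (X s - Eperm X) / Num.sqrt (Varp X).

Definition Redges (e : rel 'I_n) (P : nat -> bool) (s : {perm 'I_n}) : R :=
  (#|[set p : 'I_n * 'I_n | [&& (p.1 < p.2)%N, e p.1 p.2, P (s p.1) & P (s p.2)]]|)%:R.

Definition pairF (X Y : {perm 'I_n} -> R) (i : 'I_2) : {perm 'I_n} -> R :=
  if i == ord0 then X else Y.
Definition Cov2 (X Y : {perm 'I_n} -> R) : 'M[R]_2 :=
  \matrix_(i < 2, j < 2) Covp (pairF X Y i) (pairF X Y j).
Definition Sstat (X Y : {perm 'I_n} -> R) (s : {perm 'I_n}) : R :=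
  let d : 'rV[R]_2 := \row_(i < 2) (pairF X Y i s - Eperm (pairF X Y i)) in
  (d *m invmx (Cov2 X Y) *m d^T) ord0 ord0.

(* single change-point, t in 1..n-1 (1-based) *)
Definition R1 (e : rel 'I_n) (t : nat) := Redges e (fun k => (k < t)%N).
Definition R2 (e : rel 'I_n) (t : nat) := Redges e (fun k => (t <= k)%N).
(* changed interval (t1, t2] (1-based), i.e. 0-based times t1 <= k < t2 *)
Definition R1i (e : rel 'I_n) (t1 t2 : nat) :=
  Redges e (fun k => ~~ ((t1 <= k)%N && (k < t2)%N)).
Definition R2i (e : rel 'I_n) (t1 t2 : nat) :=
  Redges e (fun k => (t1 <= k)%N && (k < t2)%N).
End Defs.

From HB Require Import structures.
From mathcomp Require Import all_boot all_order all_algebra all_fingroup.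
From mathcomp.algebra_tactics Require Import ring lra.
From mathcomp Require Import zify.
Set Implicit Arguments. Unset Strict Implicit. Unset Printing Implicit Defensive.
Import Order.TTheory GRing.Theory Num.Theory.
Local Open Scope ring_scope.

(* The pair (R_w, R_diff) is obtained from (R_1, R_2) by an invertible linear
   change of coordinates, so the quadratic form S splits as Z_w^2 + Z_diff^2 as
   soon as R_w and R_diff are uncorrelated under the permutation null (a 2x2
   Gram-determinant identity).  For the uncorrelatedness let X_k indicate that
   vertex k lands in the first group, of size a, and put
   W = sum_(i,j) e_ij X_i X_j = 2 R_1 and L = sum_k deg(k) X_k.  Then
   R_2 = R_1 - L + |E| and R_diff = L - |E|, so with v = (a - 1)/(n - 2) the
   weight of R_2 we get Cov(R_w, R_diff) = Cov(W, L)/2 - v Var L.  Both terms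
   only involve the moments E[X_k1 ... X_km] = prod_(i<m) (a - i)/(n - i) of
   distinct vertices, and they give Cov(W, L) = 2 v Var L. *)

Section PermutationMoments.
Variables (R : rcfType) (n : nat).
Local Notation E := (@Eperm R n).
Local Notation Cov := (@Covp R n).
Implicit Types (f g h : {perm 'I_n} -> R) (a b c : R).

Lemma Eperm_ext f g : f =1 g -> E f = E g.
Proof. by move=> fg; rewrite /Eperm (eq_bigr _ (fun s _ => fg s)). Qed.

Lemma Eperm_cst c : E (fun _ => c) = c.
Proof.
by rewrite /Eperm sumr_const card_Sn -[c *+ _]mulr_natr mulfK // pnatr_eq0 -lt0n fact_gt0.
Qed.

Lemma EpermD f g : E (fun s => f s + g s) = E f + E g.
Proof. by rewrite /Eperm big_split mulrDl. Qed.

Lemma EpermZ c f : E (fun s => c * f s) = c * E f.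
Proof. by rewrite /Eperm -mulr_sumr mulrA. Qed.

Lemma Eperm_sum (I : finType) (F : I -> {perm 'I_n} -> R) :
  E (fun s => \sum_i F i s) = \sum_i E (F i).
Proof. by rewrite /Eperm exchange_big mulr_suml. Qed.

Lemma Eperm_mulg (r : {perm 'I_n}) f : E (fun s => f (r * s)%g) = E f.
Proof. by rewrite /Eperm [in RHS](reindex_inj (mulgI r)). Qed.

Lemma Covp_expand f g : Cov f g = E (fun s => f s * g s) - E f * E g.
Proof.
rewrite /Covp (@Eperm_ext _ (fun s => f s * g s + (- E g * f s + (- E f * g s + E f * E g)))).
  by rewrite !EpermD !EpermZ Eperm_cst -/(E g); ring.
by move=> s; ring.
Qed.

Lemma Covp_ext f f' g g' : f =1 f' -> g =1 g' -> Cov f g = Cov f' g'.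
Proof.
move=> ff' gg'; rewrite !Covp_expand (Eperm_ext ff') (Eperm_ext gg').
by congr (_ - _); apply: Eperm_ext => s; rewrite ff' gg'.
Qed.

Lemma CovpC f g : Cov f g = Cov g f.
Proof. by rewrite !Covp_expand mulrC (Eperm_ext (fun s => mulrC (f s) (g s))). Qed.

Lemma Covp_linl a b c f g h :
  Cov (fun s => a * f s + b * g s + c) h = a * Cov f h + b * Cov g h.
Proof.
rewrite !Covp_expand (@Eperm_ext _ (fun s => a * (f s * h s) + b * (g s * h s) + c * h s)).
  by rewrite !EpermD !EpermZ Eperm_cst; ring.
by move=> s; ring.
Qed.

Lemma Covp_linr a b c f g h :
  Cov h (fun s => a * f s + b * g s + c) = a * Cov h f + b * Cov h g.
Proof. by rewrite CovpC Covp_linl ![Cov _ h]CovpC. Qed.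

Lemma CovpZl a f h : Cov (fun s => a * f s) h = a * Cov f h.
Proof.
rewrite (@Covp_ext _ (fun s => a * f s + 0 * f s + 0) h h) ?Covp_linl; first ring.
all: by move=> s; ring.
Qed.

Lemma CovpZr a f h : Cov h (fun s => a * f s) = a * Cov h f.
Proof. by rewrite CovpC CovpZl CovpC. Qed.

Lemma Covp_suml (I : finType) (F : I -> {perm 'I_n} -> R) h :
  Cov (fun s => \sum_i F i s) h = \sum_i Cov (F i) h.
Proof.
rewrite Covp_expand (@Eperm_ext _ (fun s => \sum_i F i s * h s)); last first.
  by move=> s; rewrite mulr_suml.
by rewrite !Eperm_sum mulr_suml -sumrB; apply: eq_bigr => i _; rewrite Covp_expand.
Qed.

Lemma Covp_sumr (I : finType) (F : I -> {perm 'I_n} -> R) h :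
  Cov h (fun s => \sum_i F i s) = \sum_i Cov h (F i).
Proof. by rewrite CovpC Covp_suml; apply: eq_bigr => i _; rewrite CovpC. Qed.

Lemma Zstd_ext f g s : f =1 g -> Zstd f s = Zstd g s.
Proof. by move=> fg; rewrite /Zstd /Varp (Eperm_ext fg) (Covp_ext fg fg) fg. Qed.

End PermutationMoments.

Section GroupIndicators.
Variables (R : rcfType) (n : nat) (P : nat -> bool).
Local Notation E := (@Eperm R n).
Local Notation Cov := (@Covp R n).

Definition gsize : nat := \sum_(x < n) P x.

Definition ind (k : 'I_n) (s : {perm 'I_n}) : R := (P (s k))%:R.

Definition mom (ks : seq 'I_n) : R := E (fun s => \prod_(k <- ks) ind k s).

Lemma ind_idem k s : ind k s * ind k s = ind k s.
Proof. by rewrite /ind; case: (P _); rewrite ?mulr0 ?mulr1. Qed.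

Lemma ind_mulg k (r s : {perm 'I_n}) : ind k (r * s)%g = ind (r k) s.
Proof. by rewrite /ind permM. Qed.

Lemma sum_ind s : \sum_k ind k s = gsize%:R.
Proof. by rewrite /gsize natr_sum [in RHS](reindex_inj (@perm_inj _ s)). Qed.

Lemma mom_mem k ks : k \in ks -> mom (k :: ks) = mom ks.
Proof.
move=> ks_k; apply: Eperm_ext => s.
by rewrite big_cons !(perm_big _ (perm_to_rem ks_k)) big_cons mulrA ind_idem.
Qed.

Lemma mom_map_perm (r : {perm 'I_n}) ks : mom (map r ks) = mom ks.
Proof.
rewrite /mom -[in RHS](Eperm_mulg r); apply: Eperm_ext => s.
by rewrite big_map; apply: eq_bigr => k _; rewrite ind_mulg.
Qed.

Lemma sum_mom_cons ks : \sum_k mom (k :: ks) = gsize%:R * mom ks.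
Proof.
rewrite /mom -Eperm_sum -EpermZ; apply: Eperm_ext => s /=.
rewrite -(sum_ind s) mulr_suml; apply: eq_bigr => k _.
exact: big_cons.
Qed.

Lemma mom_cons_notin k l ks : k \notin ks -> l \notin ks -> mom (k :: ks) = mom (l :: ks).
Proof.
move=> ks'k ks'l; rewrite -(mom_map_perm (tperm k l)) /= tpermL map_id_in // => x ks_x.
by rewrite tpermD //; [apply: contraNneq ks'k | apply: contraNneq ks'l] => ->.
Qed.

Definition fmom (m : nat) : R := \prod_(i < m) ((gsize%:R - i%:R) / (n%:R - i%:R)).

(* Summing mom (k :: ks) over k gives gsize * mom ks; the summands equal mom ks
   for k in ks and, by transposition invariance, are all equal for k outside ks. *)
Lemma mom_uniq ks : uniq ks -> mom ks = fmom (size ks).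
Proof.
elim: ks => [_|l ks IH /= /andP[ks'l uniq_ks]].
  by rewrite /fmom big_ord0 /mom (Eperm_ext (fun s => big_nil _ _ _ _)) Eperm_cst.
have size_le : (size (l :: ks) <= n)%N.
  have /card_uniqP <- : uniq (l :: ks) by rewrite /= ks'l.
  by apply: leq_trans (max_card _) _; rewrite card_ord.
have n_sub_neq0 : n%:R - (size ks)%:R != 0 :> R.
  by rewrite -natrB ?pnatr_eq0 -?lt0n ?subn_gt0 // ltnW.
have := sum_mom_cons ks; rewrite (bigID (mem ks)) /=.
rewrite (eq_bigr (fun=> mom ks)) => [|k /mom_mem //].
rewrite [X in _ + X](eq_bigr (fun=> mom (l :: ks))) => [|k ks'k]; last exact: mom_cons_notin.
have /card_uniqP card_ks := uniq_ks.
have card_notin : #|[predC ks]| = (n - size ks)%N.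
  have := cardC (mem ks); rewrite card_ord card_ks.
  by move=> /(congr1 (subn^~ (size ks))); rewrite addKn.
rewrite !sumr_const card_ks card_notin -[mom ks *+ _]mulr_natr.
rewrite -[mom (l :: ks) *+ _]mulr_natr natrB; last exact: ltnW.
move=> sum_eq.
rewrite /fmom big_ord_recr /= -/(fmom _) -IH //; apply: (mulIf n_sub_neq0).
transitivity (mom ks * (gsize%:R - (size ks)%:R)); last by field.
by rewrite mulrBr; lra.
Qed.

Lemma Eperm_ind k : E (ind k) = mom [:: k].
Proof. by apply: Eperm_ext => s; rewrite unlock /= mulr1. Qed.

Lemma Eperm_ind2 k l : E (fun s => ind k s * ind l s) = mom [:: k; l].
Proof. by apply: Eperm_ext => s; rewrite unlock /= mulr1. Qed.

Lemma Eperm_ind3 i j k : E (fun s => ind i s * ind j s * ind k s) = mom [:: k; i; j].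
Proof. by apply: Eperm_ext => s; rewrite unlock /= mulr1 mulrC mulrA. Qed.

Lemma mom_single k : mom [:: k] = fmom 1.
Proof. exact: mom_uniq. Qed.

Lemma Covp_ind k l :
  Cov (ind k) (ind l) = fmom 2 - fmom 1 ^+ 2 + (fmom 1 - fmom 2) * (l == k)%:R.
Proof.
rewrite Covp_expand Eperm_ind2 !Eperm_ind !mom_single.
have [->|lk] := eqVneq l k; first by rewrite mom_mem ?mem_seq1 // mom_single /=; ring.
rewrite (mom_uniq (_ : uniq [:: k; l])) /=; first ring.
by rewrite inE eq_sym lk.
Qed.

Lemma Covp_ind2_ind i j k : i != j ->
  Cov (fun s => ind i s * ind j s) (ind k) =
  fmom 3 - fmom 2 * fmom 1 + (fmom 2 - fmom 3) * ((k == i)%:R + (k == j)%:R).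
Proof.
move=> ij; have uniq_ij : uniq [:: i; j] by rewrite /= inE ij.
rewrite Covp_expand Eperm_ind3 Eperm_ind2 Eperm_ind mom_single (mom_uniq uniq_ij).
have [->|ki] := eqVneq k i.
  by rewrite mom_mem ?mem_head // (mom_uniq uniq_ij) (negbTE ij) /=; ring.
have [->|kj] := eqVneq k j.
  by rewrite mom_mem ?inE ?eqxx ?orbT // (mom_uniq uniq_ij) /=; ring.
rewrite (mom_uniq (_ : uniq [:: k; i; j])) /=; first ring.
by rewrite !inE negb_or ki kj ij.
Qed.

End GroupIndicators.

Lemma gsize_compl n (P Q : nat -> bool) :
  (forall k, Q k = ~~ P k) -> (gsize n P + gsize n Q)%N = n.
Proof.
move=> PQ; rewrite /gsize -big_split /= (eq_bigr (fun=> 1%N)) => [|x _].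
  by rewrite sum1_card card_ord.
by rewrite PQ; case: (P x).
Qed.

Lemma gsize_ltn n t : (t <= n)%N -> gsize n (fun k => k < t)%N = t.
Proof.
suff gsize_min : gsize n (fun k => k < t)%N = minn n t by rewrite gsize_min; lia.
by rewrite /gsize; elim: n => [|n IH]; rewrite ?big_ord0 ?big_ord_recr /= ?IH; lia.
Qed.

Lemma gsize_range n t1 t2 : (t1 <= t2 <= n)%N ->
  gsize n (fun k => (t1 <= k) && (k < t2))%N = (t2 - t1)%N.
Proof.
suff gsize_min : gsize n (fun k => (t1 <= k) && (k < t2))%N = (minn n t2 - minn n t1)%N.
  by rewrite gsize_min; lia.
by rewrite /gsize; elim: n => [|n IH]; rewrite ?big_ord0 ?big_ord_recr /= ?IH; lia.
Qed.

Lemma sum_mul_delta (R : nzSemiRingType) (I : finType) (F : I -> R) k :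
  \sum_l F l * (l == k)%:R = F k.
Proof.
by rewrite (bigD1 k) //= eqxx mulr1 big1 ?addr0 // => l /negbTE->; rewrite mulr0.
Qed.

Section EdgeCounts.
Variables (R : rcfType) (n : nat) (e : rel 'I_n).
Hypotheses (e_sym : symmetric e) (e_irr : irreflexive e).
Local Notation Cov := (@Covp R n).
Local Notation ind := (ind R).
Local Notation fmom := (fmom R n).

Definition adj i j : R := (e i j)%:R.
Definition deg k : R := \sum_j adj k j.
Definition within P s : R := \sum_i \sum_j adj i j * (ind P i s * ind P j s).
Definition degsum P s : R := \sum_k deg k * ind P k s.

Lemma adjC i j : adj i j = adj j i.
Proof. by rewrite /adj e_sym. Qed.

Lemma sum_adj_deg_l : \sum_i \sum_j adj i j * deg i = \sum_k deg k ^+ 2.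
Proof. by apply: eq_bigr => i _; rewrite -mulr_suml. Qed.

Lemma sum_adj_deg_r : \sum_i \sum_j adj i j * deg j = \sum_k deg k ^+ 2.
Proof.
rewrite exchange_big -sum_adj_deg_l; apply: eq_bigr => j _.
by apply: eq_bigr => i _; rewrite adjC.
Qed.

Lemma Redges_within P s : Redges R e P s = within P s / 2.
Proof.
pose F i j := adj i j * (ind P i s * ind P j s).
have Redges_lt : Redges R e P s = \sum_(i < n) \sum_(j < n) ((i < j)%N)%:R * F i j.
  rewrite /Redges -sum1_card big_mkcond /= natr_sum pair_bigA /=.
  apply: eq_bigr => -[i j] _; rewrite inE /= /F /adj /ind.
  by case: (i < j)%N; case: (e i j); case: (P (s i)); case: (P (s j));
    rewrite /= ?(mul0r, mulr0, mul1r, mulr1).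
have within_split : within P s = \sum_(i < n) \sum_(j < n) ((i < j)%N)%:R * F i j
                                 + \sum_(i < n) \sum_(j < n) ((j < i)%N)%:R * F i j.
  rewrite -big_split; apply: eq_bigr => i _; rewrite -big_split; apply: eq_bigr => j _.
  case: (ltngtP i j) => [_|_|/val_inj ->] /=; rewrite ?mul0r ?mul1r ?addr0 ?add0r //.
  by rewrite /F /adj e_irr !mul0r.
have lt_sym : \sum_(i < n) \sum_(j < n) ((j < i)%N)%:R * F i j
              = \sum_(i < n) \sum_(j < n) ((i < j)%N)%:R * F i j.
  rewrite exchange_big; apply: eq_bigr => i _; apply: eq_bigr => j _.
  by rewrite /F adjC [ind P j s * _]mulrC.
by rewrite within_split lt_sym Redges_lt; field.
Qed.

Lemma within_compl P Q s : (forall k, Q k = ~~ P k) ->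
  within Q s = within P s - 2 * degsum P s + \sum_k deg k.
Proof.
move=> PQ; have indQ k : ind Q k s = 1 - ind P k s.
  by rewrite /ind PQ; case: (P (s k)); rewrite ?subrr ?subr0.
have expand i j : adj i j * (ind Q i s * ind Q j s) = adj i j * (ind P i s * ind P j s)
    - adj i j * ind P i s - adj j i * ind P j s + adj i j.
  by rewrite !indQ adjC; ring.
rewrite /within; under eq_bigr do under eq_bigr do rewrite expand.
under eq_bigr do rewrite big_split /= !sumrB.
rewrite big_split /= !sumrB [X in _ - X + _]exchange_big /=.
have degsumE : degsum P s = \sum_i \sum_j adj i j * ind P i s.
  by apply: eq_bigr => i _; rewrite mulr_suml.
by rewrite degsumE /deg; ring.
Qed.

Lemma Var_degsum P : Cov (degsum P) (degsum P) =
  (fmom P 2 - fmom P 1 ^+ 2) * (\sum_k deg k) ^+ 2 + (fmom P 1 - fmom P 2) * \sum_k deg k ^+ 2.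
Proof.
rewrite /degsum Covp_suml; under eq_bigr => k _ do rewrite CovpZl Covp_sumr.
under eq_bigr => k _ do under eq_bigr => l _ do rewrite CovpZr Covp_ind mulrDr mulrCA.
under eq_bigr => k _ do rewrite big_split /= -mulr_suml -mulr_sumr sum_mul_delta mulrDr.
rewrite big_split /= -mulr_suml.
rewrite [X in _ + X](eq_bigr (fun k => (fmom P 1 - fmom P 2) * deg k ^+ 2)) => [|k _]; last by ring.
by rewrite -mulr_sumr; ring.
Qed.

Lemma Cov_within_degsum P : Cov (within P) (degsum P) =
  (fmom P 3 - fmom P 2 * fmom P 1) * (\sum_k deg k) ^+ 2
  + 2 * (fmom P 2 - fmom P 3) * \sum_k deg k ^+ 2.
Proof.
have pair_term i j : adj i j * Cov (fun s => ind P i s * ind P j s) (degsum P) =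
    adj i j * ((fmom P 3 - fmom P 2 * fmom P 1) * \sum_k deg k
               + (fmom P 2 - fmom P 3) * (deg i + deg j)).
  rewrite /adj; have [eij|] := boolP (e i j); last by rewrite !mul0r.
  have ij : i != j by apply: contraTneq eij => ->; rewrite e_irr.
  rewrite /degsum Covp_sumr.
  under eq_bigr => k _ do rewrite CovpZr (Covp_ind2_ind _ _ _ ij) mulrDr [deg k * (_ * _)]mulrCA.
  rewrite big_split /= -mulr_suml -mulr_sumr.
  rewrite [X in (fmom P 2 - fmom P 3) * X](eq_bigr (fun k => deg k * (k == i)%:R
                                                    + deg k * (k == j)%:R)).
    by rewrite big_split /= !sum_mul_delta; ring.
  by move=> k _; rewrite mulrDr.
rewrite /within Covp_suml; under eq_bigr => i _ do rewrite Covp_suml.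
under eq_bigr => i _ do under eq_bigr => j _ do rewrite CovpZl pair_term mulrDr
  mulrCA [adj i j * (_ * _)]mulrCA mulrDr.
under eq_bigr do rewrite big_split /= -!mulr_sumr big_split /= -mulr_suml.
rewrite big_split /= -!mulr_sumr big_split /= sum_adj_deg_l sum_adj_deg_r -mulr_suml.
by rewrite /deg; ring.
Qed.

Lemma Cov_within_degsum_Var P : (2 < n)%N ->
  Cov (within P) (degsum P)
  = 2 * (((gsize n P)%:R - 1) / (n%:R - 2)) * Cov (degsum P) (degsum P).
Proof.
move=> n_gt2; have n_neq0 : n%:R != 0 :> R by rewrite pnatr_eq0; lia.
have n1_neq0 : n%:R - 1 != 0 :> R by rewrite subr_eq0 -(mulr1n 1) eqr_nat; lia.
have n2_neq0 : n%:R - 2 != 0 :> R by rewrite subr_eq0 eqr_nat; lia.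
rewrite Cov_within_degsum Var_degsum /fmom !big_ord_recr !big_ord0 /=.
by field; rewrite n_neq0 n1_neq0 n2_neq0.
Qed.

Lemma Covp_weighted_diff_eq0 P Q u v :
  (forall k, Q k = ~~ P k) -> (2 < n)%N -> u + v = 1 ->
  v = ((gsize n P)%:R - 1) / (n%:R - 2) ->
  Cov (fun s => u * Redges R e P s + v * Redges R e Q s)
      (fun s => Redges R e P s - Redges R e Q s) = 0.
Proof.
move=> PQ n_gt2 uv1 v_def; set S := \sum_k deg k.
have RQ s : Redges R e Q s = Redges R e P s - degsum P s + S / 2.
  by rewrite !Redges_within (within_compl _ PQ) -/S; field.
have -> : u = 1 - v by rewrite -uv1 addrK.
have RwE s : (1 - v) * Redges R e P s + v * Redges R e Q s
    = 2^-1 * within P s + (- v) * degsum P s + v * S / 2.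
  by rewrite RQ Redges_within; field.
have RdE s : Redges R e P s - Redges R e Q s = 0 * within P s + 1 * degsum P s + - (S / 2).
  by rewrite RQ; ring.
by rewrite (Covp_ext RwE RdE) Covp_linl !Covp_linr Cov_within_degsum_Var // -v_def; field.
Qed.

Lemma Redges_eq0 P s : (gsize n P <= 1)%N -> Redges R e P s = 0.
Proof.
move=> small_P; apply/eqP; rewrite pnatr_eq0 cards_eq0; apply/eqP/setP => -[i j].
rewrite !inE /=; apply/negbTE/and4P => -[ij _ Pi Pj].
have sij : s j != s i by rewrite (inj_eq perm_inj) eq_sym neq_ltn ij.
move: small_P; rewrite /gsize (bigD1 (s i)) //= (bigD1 (s j)) //= Pi Pj; lia.
Qed.

Lemma Varp_diff_small P Q : (forall k, Q k = ~~ P k) -> (n <= 2)%N ->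
  (0 < gsize n P < n)%N -> Varp (fun s => Redges R e P s - Redges R e Q s) = 0.
Proof.
move=> PQ n_le2 P_range; have sizes := gsize_compl n PQ.
have diff0 s : Redges R e P s - Redges R e Q s = 0 * Redges R e P s + 0 * Redges R e P s + 0.
  by rewrite !Redges_eq0 ?subrr ?mul0r ?addr0 //; lia.
by rewrite /Varp (Covp_ext diff0 diff0) Covp_linl !mul0r addr0.
Qed.

End EdgeCounts.

Section QuadraticForm.
Variable F : fieldType.

Let ord0_2 : ord0 = 0 :> 'I_2. Proof. exact: val_inj. Qed.
Let lift0_2 : lift 0 ord0 = 1 :> 'I_2. Proof. exact: val_inj. Qed.
Let lift1_2 : lift 1 ord0 = 0 :> 'I_2. Proof. exact: val_inj. Qed.

Lemma det_mx2 (M : 'M[F]_2) : \det M = M 0 0 * M 1 1 - M 0 1 * M 1 0.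
Proof.
rewrite (expand_det_row M 0) !big_ord_recl big_ord0 /cofactor !det_mx11 !mxE /=.
by rewrite !ord0_2 !lift0_2 lift1_2 /=; ring.
Qed.

Lemma quadform_invmx2 (M : 'M[F]_2) (x : 'rV[F]_2) : M \in unitmx ->
  (x *m invmx M *m x^T) 0 0
  = (M 1 1 * x 0 0 ^+ 2 - (M 0 1 + M 1 0) * x 0 0 * x 0 1 + M 0 0 * x 0 1 ^+ 2) / \det M.
Proof.
move=> unitM; have det_neq0 : \det M != 0 by rewrite -unitfE -unitmxE.
rewrite /invmx unitM !mxE !big_ord_recl !big_ord0 !mxE !big_ord_recl !big_ord0 !mxE.
by rewrite /cofactor !det_mx11 !mxE /= !ord0_2 !lift0_2 !lift1_2; field.
Qed.

Lemma quadform2_orthogonal_split (A B C a b c d y1 y2 : F) :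
  a * c * A + (a * d + b * c) * B + b * d * C = 0 ->
  a * d - b * c != 0 -> A * C - B ^+ 2 != 0 ->
  (C * y1 ^+ 2 - 2 * B * y1 * y2 + A * y2 ^+ 2) / (A * C - B ^+ 2)
  = (a * y1 + b * y2) ^+ 2 / (a ^+ 2 * A + 2 * a * b * B + b ^+ 2 * C)
  + (c * y1 + d * y2) ^+ 2 / (c ^+ 2 * A + 2 * c * d * B + d ^+ 2 * C).
Proof.
set K := _ + _ + _; set Vw := a ^+ 2 * A + _ + _; set Vd := c ^+ 2 * A + _ + _.
move=> K0 det_neq0 D_neq0.
have gram : Vw * Vd = (a * d - b * c) ^+ 2 * (A * C - B ^+ 2).
  have -> : Vw * Vd = (a * d - b * c) ^+ 2 * (A * C - B ^+ 2) + K ^+ 2 by rewrite /K /Vw /Vd; ring.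
  by rewrite K0 expr0n addr0.
have /andP[Vw_neq0 Vd_neq0] : (Vw != 0) && (Vd != 0).
  by rewrite -negb_or -mulf_eq0 gram mulf_neq0 // expf_neq0.
have num : (a * y1 + b * y2) ^+ 2 * Vd + (c * y1 + d * y2) ^+ 2 * Vw
    = (a * d - b * c) ^+ 2 * (C * y1 ^+ 2 - 2 * B * y1 * y2 + A * y2 ^+ 2)
      + 2 * K * (a * y1 + b * y2) * (c * y1 + d * y2) by rewrite /K /Vw /Vd; ring.
rewrite [RHS](_ : _ = ((a * y1 + b * y2) ^+ 2 * Vd + (c * y1 + d * y2) ^+ 2 * Vw) / (Vw * Vd)).
  by rewrite num gram K0 mulr0 !mul0r addr0; field; rewrite D_neq0 det_neq0.
by field; rewrite Vw_neq0 Vd_neq0.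
Qed.

End QuadraticForm.

Section OrthogonalSplit.
Variables (R : rcfType) (n : nat).
Local Notation E := (@Eperm R n).
Local Notation Cov := (@Covp R n).
Implicit Types (f g : {perm 'I_n} -> R) (a b c d : R).

Lemma Covp_bilin f g a b c d :
  Cov (fun s => a * f s + b * g s) (fun s => c * f s + d * g s)
  = a * c * Cov f f + (a * d + b * c) * Cov f g + b * d * Cov g g.
Proof.
have addr0E (h : {perm 'I_n} -> R) s : h s = h s + 0 by rewrite addr0.
rewrite (Covp_ext (addr0E (fun s => a * f s + b * g s)) (addr0E (fun s => c * f s + d * g s))).
by rewrite Covp_linl !Covp_linr [Cov g f]CovpC; ring.
Qed.

Lemma Sstat_orthogonal_split f g a b c d s :
  a * d - b * c != 0 ->
  Cov (fun s => a * f s + b * g s) (fun s => c * f s + d * g s) = 0 ->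
  Cov2 f g \in unitmx ->
  0 < Varp (fun s => a * f s + b * g s) -> 0 < Varp (fun s => c * f s + d * g s) ->
  Sstat f g s = Zstd (fun s => a * f s + b * g s) s ^+ 2
              + Zstd (fun s => c * f s + d * g s) s ^+ 2.
Proof.
move=> det_neq0 orth unitC Vw_gt0 Vd_gt0.
rewrite /Sstat quadform_invmx2 // det_mx2 !mxE /pairF /=.
rewrite /Zstd !expr_div_n !sqr_sqrtr ?ltW // /Varp !Covp_bilin !EpermD !EpermZ.
rewrite [Cov g f]CovpC; rewrite Covp_bilin in orth.
have D_neq0 : Cov f f * Cov g g - Cov f g ^+ 2 != 0.
  by move: unitC; rewrite unitmxE unitfE det_mx2 !mxE /pairF /= [Cov g f]CovpC expr2.
have split_eq := quadform2_orthogonal_split (f s - E f) (g s - E g) orth det_neq0 D_neq0.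
transitivity ((Cov g g * (f s - E f) ^+ 2 - 2 * Cov f g * (f s - E f) * (g s - E g)
    + Cov f f * (g s - E g) ^+ 2) / (Cov f f * Cov g g - Cov f g ^+ 2)).
  by congr (_ / _); ring.
by rewrite split_eq; congr (_ / _ + _ / _); ring.
Qed.

End OrthogonalSplit.

Lemma Sstat_two_groups (R : rcfType) n (e : rel 'I_n) (P Q : nat -> bool) u v :
  symmetric e -> irreflexive e -> (forall k, Q k = ~~ P k) ->
  (2 < n)%N -> u + v = 1 -> v = ((gsize n P)%:R - 1) / (n%:R - 2) ->
  Cov2 (Redges R e P) (Redges R e Q) \in unitmx ->
  0 < Varp (fun s => u * Redges R e P s + v * Redges R e Q s) ->
  0 < Varp (fun s => Redges R e P s - Redges R e Q s) ->
  forall s, Sstat (Redges R e P) (Redges R e Q) s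
  = Zstd (fun s => u * Redges R e P s + v * Redges R e Q s) s ^+ 2
  + Zstd (fun s => Redges R e P s - Redges R e Q s) s ^+ 2.
Proof.
move=> e_sym e_irr PQ n_gt2 uv1 v_def unitC Vw_gt0 Vd_gt0 s.
set X1 := Redges R e P; set X2 := Redges R e Q.
have diffE s' : X1 s' - X2 s' = 1 * X1 s' + (-1) * X2 s' by ring.
rewrite /Varp (Covp_ext diffE diffE) in Vd_gt0.
rewrite (Zstd_ext _ diffE); apply: Sstat_orthogonal_split => //.
  by rewrite mulrN1 mulr1 -opprD uv1 oppr_eq0 oner_eq0.
by rewrite -(Covp_ext (frefl _) diffE) (Covp_weighted_diff_eq0 e_sym e_irr PQ).
Qed.

Theorem lemma1 (R : rcfType) (n : nat) (e : rel 'I_n)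
  (e_sym : symmetric e) (e_irr : irreflexive e) :
  (forall t : nat, (1 <= t)%N -> (t < n)%N ->
     let X1 := R1 R e t in
     let X2 := R2 R e t in
     let p : R := (t%:R - 1) / (n%:R - 2) in
     let q : R := 1 - p in
     let Xw := fun s => q * X1 s + p * X2 s in
     let Xd := fun s => X1 s - X2 s in
     Cov2 X1 X2 \in unitmx -> 0 < Varp Xw -> 0 < Varp Xd ->
     forall s : {perm 'I_n},
       Sstat X1 X2 s = Zstd Xw s ^+ 2 + Zstd Xd s ^+ 2)
  /\
  (forall t1 t2 : nat, (1 <= t1)%N -> (t1 < t2)%N -> (t2 <= n)%N ->
     let m := (t2 - t1)%N in
     let X1 := R1i R e t1 t2 in
     let X2 := R2i R e t1 t2 in
     let Xw := fun s => (m%:R - 1) / (n%:R - 2) * X1 s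
                        + (n%:R - m%:R - 1) / (n%:R - 2) * X2 s in
     let Xd := fun s => X1 s - X2 s in
     Cov2 X1 X2 \in unitmx -> 0 < Varp Xw -> 0 < Varp Xd ->
     forall s : {perm 'I_n},
       Sstat X1 X2 s = Zstd Xw s ^+ 2 + Zstd Xd s ^+ 2).
Proof.
split.
- move=> t t_gt0 t_lt_n X1 X2 p q Xw Xd unitC Vw_gt0 Vd_gt0 s.
  have PQ k : (t <= k)%N = ~~ (k < t)%N by rewrite -leqNgt.
  have sizeP : gsize n (fun k => k < t)%N = t := gsize_ltn (ltnW t_lt_n).
  (* For n <= 2 the weights divide by n - 2 = 0; but then both groups are
     singletons without edges, so Xd is constant. *)
  have [n_le2|n_gt2] := leqP n 2.
    have Vd0 : Varp Xd = 0 by apply: (Varp_diff_small _ _ PQ n_le2); rewrite sizeP; lia.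
    by rewrite Vd0 ltxx in Vd_gt0.
  have qp : q + p = 1 by rewrite subrK.
  by apply: (Sstat_two_groups e_sym e_irr PQ n_gt2 qp); rewrite ?sizeP.
- move=> t1 t2 t1_gt0 t12 t2_le_n m X1 X2 Xw Xd unitC Vw_gt0 Vd_gt0 s.
  pose P k := ~~ ((t1 <= k) && (k < t2))%N.
  have PQ k : ((t1 <= k) && (k < t2))%N = ~~ P k by rewrite negbK.
  have sizeP : gsize n P = (n - m)%N.
    by have := gsize_compl n PQ; rewrite gsize_range ?t2_le_n ?(ltnW t12) //; lia.
  have [n_le2|n_gt2] := leqP n 2.
    have Vd0 : Varp Xd = 0 by apply: (Varp_diff_small _ _ PQ n_le2); rewrite sizeP; lia.
    by rewrite Vd0 ltxx in Vd_gt0.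
  have n2_neq0 : n%:R - 2 != 0 :> R by rewrite subr_eq0 eqr_nat; lia.
  apply: (Sstat_two_groups e_sym e_irr PQ n_gt2) => //; first by field.
  have m_le_n : (m <= n)%N by rewrite /m; lia.
  by rewrite sizeP (natrB _ m_le_n).
Qed.
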